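(* Fix $I\ge 2$, $\rho\in(0,1)$, $\varepsilon\in(0,1)$. For every $p\in\mathbb{R}$, the event $C^p_{\mathcal T}(G)\subseteq\Omega$ (the set of states in which $G$ is common $p$-believed) is the same for every information tree $\mathcal T=(F,s)$ on the agent set $\{1,\dots,I\}$ (every forest $F$ and every seeding $s$). Moreover the probability $\mathbb P_{\mathcal T}[C^p_{\mathcal T}(G)]$ is the same for every information tree $\mathcal T$.
   Context: Model. Fix an integer $I\ge2$, agents $\mathcal I=\{1,\dots,I\}$, a prior $\rho\in(0,1)$ and a loss probability $\varepsilon\in(0,1)$. A state of nature $\theta\in\{g,b\}$ has $\Pr(\theta=g)=\rho$. A forest $F$ on $\mathcal I$ is a collection of vertex-disjoint undirected trees $T^1,\dots,T^R$ (connected acyclic graphs) whose vertex sets partition $\mathcal I$; a seeding $s=(s^1,\dots,s^R)$ chooses exactly one vertex $s^r$ of each $T^r$. The pair $\mathcal T=(F,s)$ is an information tree: orient each $T^r$ away from $s^r$ and add a root $0$ (the planner) with an arc $0\to s^r$ for each $r$; this is a directed tree rooted at $0$ in which every agent has a unique direct predecessor. If $\theta=b$ no messages are sent. If $\theta=g$ the planner sends a message along each arc $0\to s^r$, and every agent who receives a message forwards it along every arc leaving her (to all her neighbours except the one she received it from). Each transmission along an arc is lost independently with probability $\varepsilon$; so given $\theta=g$, agent $i$ receives the message iff no arc on the directed path from $0$ to $i$ fails. Agent $i$ observes only $x_i\in\{y,n\}$ (received / not received). The state space is $\Omega=\{g,b\}\times\{y,n\}^I$ and $\mathbb P_{\mathcal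 T}$ is the induced probability on $\Omega$. Events: $G=\{\theta=g\}$, $Y_i=\{x_i=y\}$, $N_i=\Omega\setminus Y_i$, $Y^*=\bigcap_{i}Y_i$. Belief operators: $B^p_i(E)=\{\omega:\mathbb P_{\mathcal T}[E\mid x_i=x_i(\omega)]\ge p\}$, $B^p(E)=\bigcap_{i\in\mathcal I}B^p_i(E)$, $B^{p,0}(E)=E$, $B^{p,\ell}(E)=B^p(B^{p,\ell-1}(E))$, and $C^p_{\mathcal T}(E)=\bigcap_{\ell\ge1}B^{p,\ell}(E)$. *)

From HB Require Import structures.
From mathcomp Require Import all_boot all_order all_algebra.
From mathcomp Require Import boolp.
Set Implicit Arguments. Unset Strict Implicit. Unset Printing Implicit Defensive.
Import Order.TTheory GRing.Theory Num.Theory.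

(* Agents are 'I_n (standing for 1..I with I = n). *)

(** Information tree T = (F, s): F a forest on the agents (symmetric,
    irreflexive, acyclic edge relation), s a seeding: a set of vertices
    containing exactly one vertex of each tree (connected component) of F. *)
Record infotree (n : nat) := InfoTree {
  fedge : rel 'I_n;
  fedge_sym : forall x y, fedge x y = fedge y x;
  fedge_irr : forall x, ~~ fedge x x;
  fedge_acyclic : forall c : seq 'I_n, uniq c -> (2 < size c)%N -> ~~ cycle fedge c;
  seeds : {set 'I_n};
  seeding : forall i : 'I_n, #|[set k in seeds | connect fedge k i]| = 1%N
}.

(** j lies on the (unique) path of F from the seed of i's tree to i, i.e. the
    arc into j lies on the directed path from the root 0 to i (the arc into
    the seed s^r being 0 -> s^r). *)
Definition onpath n (T : infotree n) (j i : 'I_n) : Prop :=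
  exists k, exists p : seq 'I_n,
    [/\ k \in seeds T, path (fedge T) k p, last k p = i,
        uniq (k :: p) & j \in k :: p].

(** State space Omega = {g,b} x {y,n}^I : true = g / true = y. *)
Definition Omega n := (bool * {ffun 'I_n -> bool})%type.

Section Prob.
Variables (R : realFieldType) (rho eps : R) (n : nat) (T : infotree n).
Local Open Scope ring_scope.

(** Point mass of P_T: given g, arcs (indexed by their head agent) survive
    independently w.p. 1 - eps (a j = true means the arc into j survives);
    agent i receives iff all arcs on the path from 0 to i survive. *)
Definition pmass (w : Omega n) : R :=
  if w.1 then
    rho * \sum_(a : {ffun 'I_n -> bool} |
                 [forall i, w.2 i == [forall j, `[< onpath T j i >] ==> a j]])
            \prod_(j : 'I_n) (if a j then 1 - eps else eps)
  else (1 - rho) * (w.2 == [ffun => false])%:R.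

Definition prob (E : {set Omega n}) : R := \sum_(w in E) pmass w.

Definition cprob (E : {set Omega n}) (i : 'I_n) (v : bool) : R :=
  prob (E :&: [set w : Omega n | w.2 i == v]) / prob [set w : Omega n | w.2 i == v].

Definition Gev : {set Omega n} := [set w : Omega n | w.1].

Definition Bi (p : R) (i : 'I_n) (E : {set Omega n}) : {set Omega n} :=
  [set w : Omega n | p <= cprob E i (w.2 i)].

Definition B (p : R) (E : {set Omega n}) : {set Omega n} :=
  \bigcap_(i : 'I_n) Bi p i E.

Definition Bl (p : R) (l : nat) (E : {set Omega n}) : {set Omega n} :=
  iter l (B p) E.

Definition Cp (p : R) (E : {set Omega n}) : {set Omega n} :=
  [set w : Omega n | `[< forall l : nat, (0 < l)%N -> w \in Bl p l E >]].

End Prob.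

From Pilot Require Import Defs.
From HB Require Import structures.
From mathcomp Require Import all_boot all_order all_algebra.
From mathcomp Require Import boolp.
From mathcomp Require Import ring.
Set Implicit Arguments. Unset Strict Implicit.
Import Order.TTheory GRing.Theory Num.Theory.

(* An agent who did not receive it still believes G
   with probability at least ρε/(ρε + 1 - ρ), with equality at a seed; so for p
   up to this value G is common p-believed everywhere.  Above it, an agent whose
   strict ancestors all received the message but who did not herself can only
   blame her own arc, so her posterior of G is at most that same value: by
   induction on depth, B^{p,l}(G) forces every agent of depth at most l to have
   received.  Hence C^p(G) lies in Y*, and Y* is itself common p-believed iff
   p <= (1 - ε)^(I-1), the posterior of Y* at a seed that received.  Thus
   C^p(G) is Ω, Y* or ∅ according to thresholds that do not depend on the tree,
   and so is its probability. *)

Lemma acyclic_path_uniq (T : eqType) (e : rel T) : symmetric e ->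
  (forall c : seq T, uniq c -> 2 < size c -> ~~ cycle e c) ->
  forall k p q, path e k p -> path e k q -> uniq (k :: p) -> uniq (k :: q) ->
  last k p = last k q -> p = q.
Proof.
move=> esym acyc k p; elim: p k => [|x p IH] k [|y q] //=.
- by move=> _ _ _ /andP[kq _] lq; rewrite lq mem_last in kq.
- by move=> _ _ /andP[kp _] _ lp; rewrite -lp mem_last in kp.
move=> /andP[kx px] /andP[ky qy] ukp ukq hl.
have [exy|xy] := eqVneq x y.
  by subst y; congr (_ :: _); apply: (IH x) => //; [case/andP: ukp | case/andP: ukq].
have [xq|xNq] := boolP (x \in q).
  (* the two paths close up to the cycle k, y, ..., x *)
  case/splitPr: xq qy ukq => q1 q2; rewrite cat_path /= => /and3P[pq1 lq1x _] ukq.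
  have ucyc : uniq (k :: y :: rcons q1 x).
    have : uniq ((k :: y :: rcons q1 x) ++ q2) by rewrite /= cat_rcons.
    by rewrite cat_uniq => /andP[].
  have csize : 2 < size (k :: y :: rcons q1 x) by rewrite /= size_rcons.
  case/negP: (acyc _ ucyc csize).
  by rewrite /cycle rcons_path /= ky rcons_path pq1 !last_rcons lq1x esym kx.
(* otherwise x, k, y, ..., last y q is a second simple path from x, and it contains k *)
move: ukp ukq => /andP[kxp ux] /andP[kyq uy].
have xk : x != k by rewrite eq_sym; apply: contra kxp => /eqP->; exact: mem_head.
move: kxp; rewrite (IH x (k :: y :: q)) ?in_cons ?eqxx ?orbT //=.
- by rewrite esym kx ky.
- by rewrite !in_cons negb_or xk negb_or xy xNq kyq.
Qed.

Section Ancestors.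
Variables (n : nat) (T : infotree n).
Implicit Types i j k u v : 'I_n.

Lemma seed_connect_uniq k k' i : k \in seeds T -> k' \in seeds T ->
  connect (fedge T) k i -> connect (fedge T) k' i -> k = k'.
Proof.
move=> ks k's ki k'i; have /cards1P[s sE] := introT eqP (seeding T i).
have : k \in [set k in seeds T | connect (fedge T) k i] by rewrite inE ks ki.
have : k' \in [set k in seeds T | connect (fedge T) k i] by rewrite inE k's k'i.
by rewrite sE !inE => /eqP-> /eqP->.
Qed.

Lemma seed_connect i : exists2 k, k \in seeds T & connect (fedge T) k i.
Proof.
have /cards1P[k kE] := introT eqP (seeding T i).
by exists k; move: (set11 k); rewrite -kE inE => /andP[].
Qed.

Lemma seed_path_uniq k k' s s' : k \in seeds T -> k' \in seeds T ->
  path (fedge T) k s -> path (fedge T) k' s' -> uniq (k :: s) -> uniq (k' :: s') ->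
  last k s = last k' s' -> k = k' /\ s = s'.
Proof.
move=> ks k's ps ps' us us' ls.
have kk' : k = k'.
  by apply: (seed_connect_uniq ks k's); apply/connectP; [exists s | exists s'].
subst k'; split=> //.
exact: (acyclic_path_uniq (@fedge_sym _ T) (@fedge_acyclic _ T) ps ps' us us' ls).
Qed.

Lemma onpath_mem_seed_path k s u v : k \in seeds T -> path (fedge T) k s ->
  uniq (k :: s) -> last k s = u -> onpath T v u -> v \in k :: s.
Proof.
move=> ks ps us ls [k' [s' [k's ps' ls' us' vs']]].
by have [-> ->] := seed_path_uniq ks k's ps ps' us us' (etrans ls (esym ls')).
Qed.

Lemma onpath_refl i : onpath T i i.
Proof.
have [k ks /connectP[s ps ->]] := seed_connect i.
case: (shortenP ps) => s' ps' us' _.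
by exists k, s'; split=> //; exact: mem_last.
Qed.

Lemma onpath_seed k v : k \in seeds T -> onpath T v k -> v = k.
Proof.
move=> ks vk; have := onpath_mem_seed_path (s := [::]) ks isT isT erefl vk.
by rewrite mem_seq1 => /eqP.
Qed.

Lemma onpath_split u j : onpath T u j -> exists k s1 s2,
  [/\ k \in seeds T, path (fedge T) k (s1 ++ s2), uniq (k :: s1 ++ s2),
      last k (s1 ++ s2) = j & last k s1 = u].
Proof.
move=> [k [s [ks ps ls us uk]]]; case/splitPl: uk ps ls us => s1 s2 ls1 ps ls us.
by exists k, s1, s2.
Qed.

Lemma onpath_trans u j v : onpath T u j -> onpath T v u -> onpath T v j.
Proof.
case/onpath_split=> k [s1 [s2 [ks ps us ls ls1]]] vu.
move: (ps) (us); rewrite cat_path -cat_cons cat_uniq => /andP[ps1 _] /andP[us1 _].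
have vs1 := onpath_mem_seed_path ks ps1 us1 ls1 vu.
by exists k, (s1 ++ s2); split=> //; rewrite -cat_cons mem_cat vs1.
Qed.

Lemma onpath_antisym u j : onpath T u j -> onpath T j u -> u = j.
Proof.
case/onpath_split=> k [s1 [s2 [ks ps us ls ls1]]] ju.
move: (ps) (us); rewrite cat_path -cat_cons cat_uniq => /andP[ps1 _] /and3P[us1 dis _].
have js1 := onpath_mem_seed_path ks ps1 us1 ls1 ju.
case: s2 ls {ps us dis} (dis) => [|x s2] ls dis; first by rewrite -ls1 -ls cats0.
by case/hasP: dis; exists j; rewrite // -ls last_cat /= mem_last.
Qed.

Definition depth j := #|[set v | `[< onpath T v j >]]|.

Lemma depth_gt0 j : 0 < depth j.
Proof. by apply/card_gt0P; exists j; rewrite inE; apply/asboolP; exact: onpath_refl. Qed.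

Lemma depth_le j : depth j <= n.
Proof. by rewrite -[n]card_ord max_card. Qed.

Lemma depth_seed k : k \in seeds T -> depth k = 1.
Proof.
move=> ks; apply/eqP/cards1P; exists k; apply/setP=> v; rewrite !inE.
by apply/asboolP/eqP=> [/(onpath_seed ks)|->] //; exact: onpath_refl.
Qed.

Lemma depth_lt u j : onpath T u j -> u != j -> depth u < depth j.
Proof.
move=> uj nuj; apply: proper_card; apply/properP; split.
  by apply/subsetP=> v; rewrite !inE => /asboolP vu; apply/asboolP; exact: onpath_trans vu.
exists j; rewrite inE; apply/asboolP; first exact: onpath_refl.
by move/(onpath_antisym uj)/eqP; rewrite (negPf nuj).
Qed.

End Ancestors.

Local Open Scope ring_scope.

Definition received n (T : infotree n) (a : {ffun 'I_n -> bool}) : {ffun 'I_n -> bool} :=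
  [ffun i => [forall j, `[< onpath T j i >] ==> a j]].

Definition arc_weight (R : numDomainType) (eps : R) n (a : {ffun 'I_n -> bool}) : R :=
  \prod_j (if a j then 1 - eps else eps).

Definition xev n (i : 'I_n) (v : bool) : {set Omega n} := [set w : Omega n | w.2 i == v].

Definition Ystar n : {set Omega n} := [set w : Omega n | [forall i, w.2 i]].

Definition silence n : Omega n := (false, [ffun => false]).

Definition arc_prob (R : numDomainType) (eps : R) n (P : pred {ffun 'I_n -> bool}) : R :=
  \sum_a arc_weight eps a * (P a)%:R.

Section ArcWeights.
Variables (R : numDomainType) (eps : R) (n : nat).
Implicit Types (j : 'I_n) (a : {ffun 'I_n -> bool}) (P Q : pred {ffun 'I_n -> bool}).

Lemma eq_arc_prob P Q : P =1 Q -> arc_prob eps P = arc_prob eps Q.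
Proof. by move=> PQ; apply: eq_bigr => a _; rewrite PQ. Qed.

Lemma arc_prob_arc j b : arc_prob eps (fun a => a j == b) = if b then 1 - eps else eps.
Proof.
pose F i c := (if c then 1 - eps else eps) * (if i == j then (c == b)%:R else 1).
transitivity (\sum_(a : {ffun 'I_n -> bool}) \prod_i F i (a i)).
  apply: eq_bigr => a _; rewrite big_split /=; congr (_ * _).
  by rewrite (bigD1 j) //= eqxx big1 ?mulr1 // => i /negPf ->.
rewrite -bigA_distr_bigA (bigD1 j) //= [X in _ * X]big1 => [|i /negPf ji].
  by rewrite mulr1 big_bool /F eqxx; case: (b) => /=; rewrite ?mulr1 ?mulr0 ?addr0 ?add0r.
by rewrite big_bool /F ji /= !mulr1 subrK.
Qed.

Lemma arc_prob_predT : arc_prob eps (n := n) predT = 1.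
Proof.
rewrite /arc_prob; under eq_bigr do rewrite /= mulr1.
rewrite /arc_weight -(bigA_distr_bigA (fun _ (c : bool) => if c then 1 - eps else eps)).
by rewrite big1 // => i _; rewrite big_bool /= subrK.
Qed.

Lemma arc_weight_all :
  arc_weight eps ([ffun => true] : {ffun 'I_n -> bool}) = (1 - eps) ^+ n.
Proof.
by rewrite /arc_weight; under eq_bigr do rewrite ffunE; rewrite prodr_const card_ord.
Qed.

Hypothesis eps01 : 0 <= eps <= 1.

Lemma arc_weight_ge0 a : 0 <= arc_weight eps a.
Proof.
by case/andP: eps01 => e0 e1; apply: prodr_ge0 => i _; case: (a i); rewrite ?subr_ge0.
Qed.

Lemma ler_arc_prob P Q : (forall a, P a -> Q a) -> arc_prob eps P <= arc_prob eps Q.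
Proof.
move=> PQ; apply: ler_sum => a _; apply: ler_wpM2l; first exact: arc_weight_ge0.
by case Pa: (P a); rewrite ?(PQ a Pa) //; case: (Q a).
Qed.

Lemma arc_weight_le_prob P a0 : P a0 -> arc_weight eps a0 <= arc_prob eps P.
Proof.
move=> Pa0; rewrite /arc_prob (bigD1 a0) //= Pa0 mulr1 lerDl; apply: sumr_ge0 => a _.
by apply: mulr_ge0; [exact: arc_weight_ge0 | case: (P a)].
Qed.

End ArcWeights.

Section Received.
Variables (n : nat) (T : infotree n).
Implicit Types a : {ffun 'I_n -> bool}.

Lemma received_arc a i : received T a i -> a i.
Proof.
by rewrite ffunE => /forallP/(_ i)/implyP; apply; apply/asboolP; exact: onpath_refl.
Qed.

Lemma received_all : received T [ffun => true] = [ffun => true].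
Proof. by apply/ffunP=> i; rewrite !ffunE; apply/forallP=> j; rewrite ffunE implybT. Qed.

Lemma all_received a : [forall i, received T a i] = (a == [ffun => true]).
Proof.
apply/forallP/eqP => [ra|->]; last by move=> i; rewrite received_all ffunE.
by apply/ffunP=> i; rewrite ffunE received_arc.
Qed.

Lemma received_seed a k : k \in seeds T -> received T a k = a k.
Proof.
move=> ks; apply/idP/idP; first exact: received_arc.
by move=> ak; rewrite ffunE; apply/forallP=> v; apply/implyP=> /asboolP/(onpath_seed ks)->.
Qed.

End Received.

(* The posterior of [G] at a seed that received nothing. *)
Definition silent_posterior (R : realFieldType) (rho eps : R) : R :=
  rho * eps / (rho * eps + (1 - rho)).

(* The posterior of [Y*] at a seed that received the message. *)
Definition consensus_posterior (R : realFieldType) (eps : R) n : R := (1 - eps) ^+ n.-1.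

Section Prob.
Variables (R : realFieldType) (rho eps : R) (n : nat) (T : infotree n).
Hypotheses (rho01 : 0 < rho < 1) (eps01 : 0 < eps < 1).
Implicit Types (E F : {set Omega n}) (a : {ffun 'I_n -> bool}).

Local Notation prob := (prob rho eps T).
Local Notation cprob := (cprob rho eps T).

Lemma pmass_true x :
  pmass rho eps T (true, x) = rho * \sum_(a | received T a == x) arc_weight eps a.
Proof.
rewrite /pmass /=; congr (_ * _); apply: eq_bigl => a.
apply/forallP/eqP => [xa|<- i]; last by rewrite ffunE.
by apply/ffunP=> i; rewrite ffunE; apply/esym/eqP.
Qed.

Lemma probE E :
  prob E = rho * arc_prob eps (fun a => (true, received T a) \in E)
           + (1 - rho) * (silence n \in E)%:R.
Proof.
rewrite /Defs.prob big_mkcond.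
pose F b x := if (b, x) \in E then pmass rho eps T (b, x) else 0.
rewrite (eq_bigr (fun w => F w.1 w.2)); last by case.
rewrite -(pair_bigA _ F) big_bool /=; congr (_ + _).
  rewrite /arc_prob [in RHS](partition_big (received T) xpredT) // mulr_sumr.
  apply: eq_bigr => x _.
  rewrite (eq_bigr (fun a => arc_weight eps a * ((true, x) \in E)%:R)); last first.
    by move=> a /eqP->.
  by rewrite -big_distrl /F /= pmass_true mulrA; case: (_ \in E); rewrite ?mulr1 ?mulr0.
rewrite (bigD1 [ffun => false]) //= big1 => [|x /negPf xn]; last first.
  by rewrite /F /pmass /= xn mulr0; case: (_ \in E).
by rewrite addr0 /F /pmass /= eqxx; case: (_ \in E); rewrite ?mulr1 ?mulr0.
Qed.

Let rho_gt0 : 0 < rho. Proof. by case/andP: rho01. Qed.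
Let rhoC_gt0 : 0 < 1 - rho. Proof. by case/andP: rho01 => _; rewrite subr_gt0. Qed.
Let eps_gt0 : 0 < eps. Proof. by case/andP: eps01. Qed.
Let epsC_gt0 : 0 < 1 - eps. Proof. by case/andP: eps01 => _; rewrite subr_gt0. Qed.
Let eps_unit : 0 <= eps <= 1. Proof. by rewrite ltW //= -subr_ge0 ltW. Qed.

Lemma prob_setT : prob setT = 1.
Proof.
rewrite probE inE mulr1 (@eq_arc_prob _ _ _ _ predT) => [|a]; last by rewrite inE.
by rewrite arc_prob_predT mulr1 subrKC.
Qed.

Lemma prob_set0 : prob set0 = 0.
Proof.
by rewrite probE inE mulr0 addr0 /arc_prob big1 ?mulr0 // => a _; rewrite inE mulr0.
Qed.

Lemma le_prob E F : E \subset F -> prob E <= prob F.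
Proof.
move=> /subsetP EF; rewrite !probE; apply: lerD; rewrite ler_pM2l //.
  by apply: (ler_arc_prob eps_unit) => a /EF.
by case: (boolP (silence n \in E)) => [/EF ->|] //; case: (_ \in F).
Qed.

Lemma prob_Ystar : (0 < n)%N -> prob (Ystar n) = rho * (1 - eps) ^+ n.
Proof.
move=> n_gt0; rewrite probE [silence n \in _]inE.
have /negPf-> : ~~ [forall i, (silence n).2 i].
  by apply/forallPn; exists (Ordinal n_gt0); rewrite ffunE.
rewrite mulr0 addr0 (@eq_arc_prob _ _ _ _ (pred1 [ffun => true])) => [|a]; last first.
  by rewrite inE /= all_received.
rewrite /arc_prob (bigD1 [ffun => true]) //= eqxx mulr1 big1 ?addr0 ?arc_weight_all //.
by move=> a /negPf->; rewrite mulr0.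
Qed.

Lemma prob_received i : prob (xev i true) = rho * arc_prob eps (fun a => received T a i).
Proof.
rewrite probE !inE ffunE mulr0 addr0; congr (_ * _).
by apply: eq_arc_prob => a; rewrite inE eqb_id.
Qed.

Lemma prob_unreceived i :
  prob (xev i false) = rho * arc_prob eps (fun a => ~~ received T a i) + (1 - rho).
Proof.
rewrite probE !inE ffunE mulr1; congr (_ * _ + _).
by apply: eq_arc_prob => a; rewrite inE eqbF_neg.
Qed.

Lemma prob_G_unreceived i :
  prob (Gev n :&: xev i false) = rho * arc_prob eps (fun a => ~~ received T a i).
Proof.
rewrite probE !inE mulr0 addr0; congr (_ * _).
by apply: eq_arc_prob => a; rewrite !inE eqbF_neg.
Qed.

(* the arc into [i] alone fails with probability [eps] *)
Lemma eps_le_unreceived i : eps <= arc_prob eps (fun a => ~~ received T a i).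
Proof.
rewrite -[X in X <= _](arc_prob_arc eps i false).
apply: (ler_arc_prob eps_unit) => a /eqP ai.
by apply: contraFN ai; exact: received_arc.
Qed.

Lemma prob_received_gt0 i : 0 < prob (xev i true).
Proof.
rewrite prob_received mulr_gt0 //.
apply: lt_le_trans (arc_weight_le_prob eps_unit (a0 := [ffun => true]) _).
  by rewrite arc_weight_all exprn_gt0.
by rewrite received_all ffunE.
Qed.

Lemma prob_received_le i : prob (xev i true) <= rho * (1 - eps).
Proof.
rewrite prob_received ler_pM2l // -(arc_prob_arc eps i true).
by apply: (ler_arc_prob eps_unit) => a /received_arc ->.
Qed.

Lemma prob_unreceived_ge i : rho * eps + (1 - rho) <= prob (xev i false).
Proof. by rewrite prob_unreceived lerD2r ler_pM2l ?eps_le_unreceived. Qed.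

Lemma prob_xev_gt0 i v : 0 < prob (xev i v).
Proof.
case: v; first exact: prob_received_gt0.
by apply: lt_le_trans (prob_unreceived_ge i); rewrite addr_gt0 ?mulr_gt0.
Qed.

Let den_gt0 : 0 < rho * eps + (1 - rho). Proof. by rewrite addr_gt0 ?mulr_gt0. Qed.

Lemma silent_posterior_gt0 : 0 < silent_posterior rho eps.
Proof. by rewrite divr_gt0 ?mulr_gt0. Qed.

Lemma silent_posterior_le1 : silent_posterior rho eps <= 1.
Proof. by rewrite ler_pdivrMr // mul1r lerDl ltW. Qed.

Lemma cprob_setT i v : cprob setT i v = 1.
Proof. by rewrite /Defs.cprob -/(xev i v) setTI divff // lt0r_neq0 // prob_xev_gt0. Qed.

Lemma cprob_G_received i : cprob (Gev n) i true = 1.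
Proof.
rewrite /Defs.cprob -/(xev i true).
have -> : prob (Gev n :&: xev i true) = prob (xev i true).
  rewrite !probE !inE /= ffunE; congr (_ * _ + _).
  by apply: eq_arc_prob => a; rewrite !inE.
by rewrite divff // lt0r_neq0 // prob_received_gt0.
Qed.

Lemma silent_posterior_le_cprob_G i : silent_posterior rho eps <= cprob (Gev n) i false.
Proof.
rewrite /Defs.cprob -/(xev i false) prob_G_unreceived prob_unreceived /silent_posterior.
set g := arc_prob _ _; have eps_le_g : eps <= g := eps_le_unreceived i.
rewrite ler_pdivrMr // mulrAC ler_pdivlMr; last first.
  by apply: lt_le_trans den_gt0 _; rewrite lerD2r ler_pM2l.
rewrite -subr_ge0 (_ : _ - _ = rho * (1 - rho) * (g - eps)); last by ring.
by rewrite mulr_ge0 ?subr_ge0 // mulr_ge0 // ltW.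
Qed.

Lemma consensus_posterior_le_cprob E i : (0 < n)%N -> (true, [ffun => true]) \in E ->
  consensus_posterior eps n <= cprob E i true.
Proof.
move=> n_gt0 allE; rewrite /Defs.cprob -/(xev i true) ler_pdivlMr ?prob_received_gt0 //.
apply: (@le_trans _ _ (rho * (1 - eps) ^+ n)).
  rewrite -[in X in _ <= X](prednK n_gt0) exprS /consensus_posterior.
  rewrite mulrCA mulrA [in X in _ <= X]mulrC ler_pM2l ?exprn_gt0 //.
  by rewrite mulrC prob_received_le.
rewrite probE -arc_weight_all -[X in X <= _]addr0.
apply: lerD; last by rewrite mulr_ge0 ?ler0n // ltW.
rewrite ler_pM2l //; apply: arc_weight_le_prob => //.
by rewrite !inE received_all allE ffunE.
Qed.

(* Within [E], non-receipt at [j] forces the arc into [j] to fail. *)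
Lemma cprob_unreceived_le E j : silence n \notin E ->
  (forall w, w \in E -> forall u, u != j -> onpath T u j -> w.2 u) ->
  cprob E j false <= silent_posterior rho eps.
Proof.
move=> silentNE ancE; rewrite /Defs.cprob -/(xev j false) /silent_posterior.
rewrite ler_pdivrMr ?prob_xev_gt0 //; apply: (@le_trans _ _ (rho * eps)).
  rewrite probE inE (negPf silentNE) mulr0 addr0 ler_pM2l //.
  rewrite -[X in _ <= X](arc_prob_arc eps j false).
  apply: (ler_arc_prob eps_unit) => a; rewrite !inE /= => /andP[aE /eqP unrec].
  rewrite eqbF_neg; apply: contraFN unrec => aj.
  rewrite ffunE; apply/forallP=> v; apply/implyP=> /asboolP vj.
  have [->|v_ne_j] := eqVneq v j; first exact: aj.
  exact: received_arc (ancE _ aE v v_ne_j vj).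
by rewrite mulrAC ler_pdivlMr // ler_pM2l ?mulr_gt0 ?prob_unreceived_ge.
Qed.

Lemma cprob_Ystar_unreceived E j : E \subset Ystar n -> cprob E j false = 0.
Proof.
move=> /subsetP EY; rewrite /Defs.cprob -/(xev j false).
suff -> : E :&: xev j false = set0 by rewrite prob_set0 mul0r.
apply/setP=> w; rewrite !inE; case: (boolP (w \in E)) => // /EY.
by rewrite inE => /forallP/(_ j)->.
Qed.

Lemma cprob_Ystar_seed E k : (0 < n)%N -> k \in seeds T -> E \subset Ystar n ->
  cprob E k true <= consensus_posterior eps n.
Proof.
move=> n_gt0 ks EY; rewrite /Defs.cprob -/(xev k true) ler_pdivrMr ?prob_received_gt0 //.
have -> : prob (xev k true) = rho * (1 - eps).
  rewrite prob_received -(arc_prob_arc eps k true); congr (_ * _).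
  by apply: eq_arc_prob => a; rewrite received_seed.
apply: le_trans (le_prob (subset_trans (subsetIl _ _) EY)) _.
by rewrite prob_Ystar // -{1}(prednK n_gt0) exprS [X in _ <= X]mulrC -mulrA.
Qed.

End Prob.

Section CommonBelief.
Variables (R : realFieldType) (rho eps : R) (n : nat) (T : infotree n) (p : R).
Implicit Types (E F : {set Omega n}) (w : Omega n).

Lemma inB E w : (w \in B rho eps T p E) = [forall i, p <= cprob rho eps T E i (w.2 i)].
Proof.
apply/bigcapP/forallP => [wB i|wB i _]; first by have := wB i isT; rewrite inE.
by rewrite inE.
Qed.

Lemma BlS l E : Bl rho eps T p l.+1 E = B rho eps T p (Bl rho eps T p l E).
Proof. by []. Qed.

Lemma Cp_sandwich E F m : (forall l, F \subset Bl rho eps T p l.+1 E) ->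
  Bl rho eps T p m.+1 E \subset F -> Cp rho eps T p E = F.
Proof.
move=> FB BF; apply/setP=> w; rewrite inE; apply/asboolP/idP => [wC|wF [|l] // _].
  exact: (subsetP BF) (wC m.+1 isT).
exact: (subsetP (FB l)).
Qed.

Hypotheses (rho01 : 0 < rho < 1) (eps01 : 0 < eps < 1) (n_gt0 : (0 < n)%N).

Local Notation Bl l := (Bl rho eps T p l (Gev n)).

Lemma Bl_G_all : p <= silent_posterior rho eps -> forall l, Bl l.+1 = setT.
Proof.
move=> p_le; have p_le1 := le_trans p_le (silent_posterior_le1 rho01 eps01).
elim=> [|l IHl]; apply/setP=> w; rewrite BlS inB inE; apply/forallP=> i.
  case: (w.2 i); first by rewrite cprob_G_received.
  exact: le_trans p_le (silent_posterior_le_cprob_G _ rho01 eps01 _).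
by rewrite IHl cprob_setT.
Qed.

Lemma Bl_G_received : silent_posterior rho eps < p -> forall l,
  silence n \notin Bl l /\ forall w, w \in Bl l -> forall j, (depth T j <= l)%N -> w.2 j.
Proof.
move=> p_gt; elim=> [|l [silNE ancE]].
  by split=> [|w _ j]; [rewrite inE | rewrite leqNgt depth_gt0].
have recE w : w \in Bl l.+1 -> forall j, (depth T j <= l.+1)%N -> w.2 j.
  rewrite BlS inB => /forallP wB j dj; apply/negPn/negP => /negbTE wj.
  have := wB j; rewrite wj; apply/negP; rewrite -ltNge; apply: le_lt_trans p_gt.
  apply: cprob_unreceived_le => // w' w'E u u_ne_j uj.
  by apply: ancE => //; rewrite -ltnS (leq_trans (depth_lt uj u_ne_j)).
split=> //; have [k ks _] := seed_connect T (Ordinal n_gt0).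
by apply/negP => /recE/(_ k); rewrite depth_seed // ffunE => /(_ isT).
Qed.

Lemma Bl_G_sub_Ystar : silent_posterior rho eps < p -> Bl n \subset Ystar n.
Proof.
move=> p_gt; apply/subsetP=> w /((Bl_G_received p_gt n).2) wE.
by rewrite inE; apply/forallP=> j; rewrite wE ?depth_le.
Qed.

Lemma Ystar_sub_Bl_G : p <= consensus_posterior eps n -> forall l, Ystar n \subset Bl l.+1.
Proof.
move=> p_le; elim=> [|l IHl]; apply/subsetP=> w wY; rewrite BlS inB; apply/forallP=> i;
  move: wY; rewrite inE => /forallP->;
  apply: (le_trans p_le); apply: consensus_posterior_le_cprob => //.
  by rewrite inE.
by apply: (subsetP IHl); rewrite inE; apply/forallP=> k; rewrite ffunE.
Qed.

Lemma Bl_G_empty : silent_posterior rho eps < p -> consensus_posterior eps n < p ->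
  Bl n.+1 = set0.
Proof.
move=> p_gt_silent p_gt_cons; have [k ks _] := seed_connect T (Ordinal n_gt0).
have BlY := Bl_G_sub_Ystar p_gt_silent.
apply/setP=> w; rewrite inE BlS inB; apply/negbTE/forallPn; exists k; rewrite -ltNge.
case: (w.2 k).
  exact: le_lt_trans (cprob_Ystar_seed rho01 eps01 n_gt0 ks BlY) p_gt_cons.
by rewrite cprob_Ystar_unreceived // (lt_trans (silent_posterior_gt0 rho01 eps01)).
Qed.

Lemma Cp_G : Cp rho eps T p (Gev n) = if p <= silent_posterior rho eps then setT
  else if p <= consensus_posterior eps n then Ystar n else set0.
Proof.
case: leP => [p_le|p_gt]; first by apply: (@Cp_sandwich _ _ 0) => [l|]; rewrite ?Bl_G_all.
case: leP => [p_le|p_gt_cons].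
  apply: (@Cp_sandwich _ _ n.-1); first exact: Ystar_sub_Bl_G.
  by rewrite prednK //; exact: Bl_G_sub_Ystar.
by apply: (@Cp_sandwich _ _ n) => [l|]; rewrite ?sub0set ?Bl_G_empty.
Qed.

End CommonBelief.

Unset Implicit Arguments.

Theorem theorem1 (R : realFieldType) (n : nat) (rho eps : R) :
  (2 <= n)%N -> 0 < rho < 1 -> 0 < eps < 1 ->
  forall p : R, forall T1 T2 : infotree n,
    Cp rho eps T1 p (Gev n) = Cp rho eps T2 p (Gev n) /\
    prob rho eps T1 (Cp rho eps T1 p (Gev n)) = prob rho eps T2 (Cp rho eps T2 p (Gev n)).
Proof.
move=> n_ge2 rho01 eps01 p T1 T2; have n_gt0 : (0 < n)%N by apply: leq_trans n_ge2.
rewrite !Cp_G //; split=> //.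
case: ifP => _; first by rewrite !prob_setT.
by case: ifP => _; rewrite ?prob_Ystar ?prob_set0.
Qed.
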